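(* Let $(X,\mu)$ be any measure space, let $N\geq 2$ be an integer, and let $f_1,\dots,f_N$ be non-negative measurable functions on $X$ with $0<\sum_{j=1}^N \|f_j\|_p^p<\infty$. Define $$\Gamma_p(f_1,\dots,f_N) := \frac{\left\Vert \binom{N}{2}^{-1}\sum_{1\le i< j\le N} f_if_j\right\Vert_{p/2}^{p/2}}{\frac1N \sum_{j=1}^N \|f_j\|_p^p}$$ and $$r(N,p) = \frac{2N}{2N+(p-2)(2N-1)}.$$ Then for all $p\in(2,\infty)$, $$\Big\|\sum_{j=1}^N f_j\Big\|_p^p \leq \Big[\,1 + (N-1)\,\Gamma_p(f_1,\dots,f_N)^{r(N,p)}\Big]^{p-1}\sum_{j=1}^N \|f_j\|_p^p,$$ and for all $p\in(1,2)$ the reverse inequality ($\geq$) holds.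
   Context: For any real $q\neq 0$ and measurable $f$, $\|f\|_q := \left(\int |f|^q\,d\mu\right)^{1/q}$ (this notation is used even when $q<1$, where it is not a norm). One has $0\le\Gamma_p\le 1$. *)

From HB Require Import structures.
From mathcomp Require Import all_boot all_order all_algebra.
From mathcomp Require Import all_classical all_reals all_analysis.
Set Implicit Arguments. Unset Strict Implicit. Unset Printing Implicit Defensive.
Import Order.TTheory GRing.Theory Num.Theory.
Local Open Scope classical_set_scope.
Local Open Scope ring_scope.

Definition pnormq {R : realType} {d : measure_display} {T : measurableType d}
  (mu : {measure set T -> \bar R}) (f : T -> R) (q : R) : \bar R :=
  (\int[mu]_x ((`|f x| `^ q)%:E))%E.

Definition sumpnorm {R : realType} {d : measure_display} {T : measurableType d}
  (mu : {measure set T -> \bar R}) (N : nat) (f : 'I_N -> T -> R) (p : R) : \bar R :=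
  (\sum_(j < N) pnormq mu (f j) p)%E.

Definition pairavg {R : realType} {T : Type} (N : nat) (f : 'I_N -> T -> R) : T -> R :=
  fun x => ('C(N, 2)%:R)^-1 * \sum_(i < N) \sum_(j < N | (i < j)%N) f i x * f j x.

(* Gamma_p(f_1..f_N); all quantities are finite under the hypotheses *)
Definition Gammap {R : realType} {d : measure_display} {T : measurableType d}
  (mu : {measure set T -> \bar R}) (N : nat) (f : 'I_N -> T -> R) (p : R) : R :=
  fine (pnormq mu (pairavg f) (p / 2)) / ((N%:R)^-1 * fine (sumpnorm mu f p)).

Definition rNp {R : realType} (N : nat) (p : R) : R :=
  (2 * N%:R) / (2 * N%:R + (p - 2) * (2 * N%:R - 1)).

From HB Require Import structures.
From mathcomp Require Import all_boot all_order all_algebra.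
From mathcomp Require Import all_classical all_reals all_analysis.
From mathcomp Require Import ring lra measurable_realfun.
Import Order.TTheory GRing.Theory Num.Theory.
Local Open Scope classical_set_scope.
Local Open Scope ring_scope.
Section pair_sums.
Variable R : comPzRingType.

Lemma natr_bin2 n : 'C(n, 2)%:R * 2 = n%:R * (n%:R - 1) :> R.
Proof.
have := congr1 (GRing.natmul (1 : R)) (bin_ffact n 2).
rewrite ffactnS ffactn1 !natrM => ->.
by case: n => [|n]; rewrite ?mul0r // -natr1 addrK.
Qed.

Lemma sqr_sum_pairs n (a : 'I_n -> R) :
  (\sum_(i < n) a i) ^+ 2 =
  \sum_(i < n) a i ^+ 2 + 2 * \sum_(i < n) \sum_(j < n | (i < j)%N) a i * a j.
Proof.
have split_row i : \sum_(j < n) a i * a j = a i ^+ 2 +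
    (\sum_(j < n | (i < j)%N) a i * a j + \sum_(j < n | (j < i)%N) a i * a j).
  rewrite (bigD1 i) //= -expr2 (bigID (fun j : 'I_n => (i < j)%N)) /=.
  congr (_ + (_ + _)); apply: eq_bigl => j; rewrite -(inj_eq val_inj) /=.
    by case: ltngtP.
  by case: ltngtP.
rewrite expr2 big_distrl /=.
under eq_bigr => i _ do rewrite big_distrr /= split_row.
rewrite !big_split /= mulr2n mulrDl mul1r; congr (_ + (_ + _)).
rewrite (exchange_big_dep xpredT) //=.
by apply: eq_bigr => i _; apply: eq_bigr => j _; rewrite mulrC.
Qed.

End pair_sums.
Section powR_inequalities.
Context {R : realType}.
Implicit Types x y u v s al be : R.

Lemma ltr1_powR {x al} : 1 < x -> al < 1 -> x `^ al < x.
Proof.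
move=> x1 al1; have x0 : 0 < x by lra.
rewrite /powR gt_eqF // -{2}(lnK x0) ltr_expR.
by have := ln_gt0 x1; nra.
Qed.

Lemma le0_ger_powR be x y : be <= 0 -> 0 < x -> x <= y -> y `^ be <= x `^ be.
Proof.
move=> be0 x0 xy; have y0 : 0 < y by lra.
rewrite /powR !gt_eqF // ler_expR.
have : ln x <= ln y by rewrite ler_ln ?posrE.
nra.
Qed.

Lemma powR_amgm {u v al} : 0 <= u -> 0 <= v -> 0 < al < 1 ->
  u `^ al * v `^ (1 - al) <= al * u + (1 - al) * v.
Proof.
move=> u0 v0 /andP[al0 al1]; have be0 : 0 < 1 - al by lra.
have := @conjugate_powR R (u `^ al) (v `^ (1 - al)) al^-1 (1 - al)^-1
  (powR_ge0 _ _) (powR_ge0 _ _).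
rewrite !invr_gt0 !invrK -!powRrM !mulfV ?gt_eqF // !powRr1 // subrKC.
by rewrite [al * u]mulrC [_ * v]mulrC; apply.
Qed.

Lemma hoelder_sum_powR {I : finType} {x y : I -> R} {al} : 0 < al < 1 ->
  (forall i, 0 <= x i) -> (forall i, 0 <= y i) ->
  \sum_i x i `^ al * y i `^ (1 - al) <=
  (\sum_i x i) `^ al * (\sum_i y i) `^ (1 - al).
Proof.
move=> /[dup] al01 /andP[al0 al1] x0 y0.
set X := \sum_i x i; set Y := \sum_i y i.
have X0 : 0 <= X by exact: sumr_ge0.
have Y0 : 0 <= Y by exact: sumr_ge0.
have [XE|Xn0] := eqVneq X 0.
  rewrite big1 => [|i _]; first by rewrite mulr_ge0 ?powR_ge0.
  by rewrite (psumr_eq0P (fun i _ => x0 i) XE) // powR0 ?mul0r ?gt_eqF.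
have [YE|Yn0] := eqVneq Y 0.
  rewrite big1 => [|i _]; first by rewrite mulr_ge0 ?powR_ge0.
  by rewrite (psumr_eq0P (fun i _ => y0 i) YE) // powR0 ?mulr0 // gt_eqF // subr_gt0.
have Xp : 0 < X by rewrite lt0r Xn0.
have Yp : 0 < Y by rewrite lt0r Yn0.
set K := X `^ al * Y `^ (1 - al).
have K0 : 0 <= K by rewrite mulr_ge0 ?powR_ge0.
(* each term is K times a weighted geometric mean of the normalized x i / X and y i / Y *)
apply: (@le_trans _ _ (\sum_i K * (al * (x i / X) + (1 - al) * (y i / Y)))).
  apply: ler_sum => i _.
  have -> : x i `^ al * y i `^ (1 - al) = K * ((x i / X) `^ al * (y i / Y) `^ (1 - al)).
    by rewrite /K mulrACA -!powRM ?divr_ge0 // !(mulrC _ (_ / _)) !divfK ?gt_eqF.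
  by rewrite ler_wpM2l // powR_amgm ?divr_ge0.
rewrite -mulr_sumr big_split /= -!mulr_sumr -!mulr_suml -/X -/Y !mulfV ?gt_eqF //.
by rewrite !mulr1 subrKC mulr1.
Qed.

End powR_inequalities.

Section more.
Context {R : realType}.
Lemma powR_sum_le {I : finType} {a : I -> R} {p} : 1 < p -> (forall i, 0 <= a i) ->
  (\sum_i a i) `^ p <= #|I|%:R `^ (p - 1) * \sum_i a i `^ p.
Proof.
move=> p1 a0; have p0 : 0 < p by lra.
have ip : 0 < p^-1 < 1 by rewrite invr_gt0 invf_lt1; lra.
have := hoelder_sum_powR ip (fun i => powR_ge0 (a i) p) (fun=> ler01).
rewrite powR1 sumr_const -mulr_natr mul1r (eq_bigr a) => [H|i _]; last first.
  by rewrite -powRrM mulfV ?gt_eqF // powRr1 // mulr1.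
have S0 : 0 <= \sum_i a i `^ p by rewrite sumr_ge0 // => i _; rewrite powR_ge0.
apply: le_trans (ge0_ler_powR (ltW p0) _ _ H) _; rewrite ?nnegrE ?sumr_ge0 ?mulr_ge0 ?powR_ge0 //.
rewrite powRM ?powR_ge0 // -!powRrM mulVf ?gt_eqF // powRr1 // mulrC.
by rewrite mulrBl mul1r mulVf ?gt_eqF.
Qed.

Lemma sum_sqr_le_hoelder {I : finType} {a : I -> R} {p} : 2 < p -> (forall i, 0 <= a i) ->
  \sum_i a i ^+ 2 <=
  (\sum_i a i) `^ ((p - 2) / (p - 1)) * (\sum_i a i `^ p) `^ (1 - (p - 2) / (p - 1)).
Proof.
move=> p2 a0; set th := (p - 2) / (p - 1).
have th01 : 0 < th < 1 by rewrite divr_gt0 ?ltr_pdivrMr /=; lra.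
have thp : th + p * (1 - th) = 2 by rewrite /th; field; lra.
apply: le_trans (hoelder_sum_powR th01 a0 (fun i => powR_ge0 (a i) p)).
rewrite le_eqVlt; apply/orP; left; apply/eqP/eq_bigr => i _.
by rewrite -powRrM -powRD thp ?(powR_mulrn 2) // pnatr_eq0.
Qed.

Lemma sum_powR_le_hoelder {I : finType} {a : I -> R} {p} : 1 < p -> p < 2 ->
  (forall i, 0 <= a i) ->
  \sum_i a i `^ p <= (\sum_i a i) `^ (2 - p) * (\sum_i a i ^+ 2) `^ (p - 1).
Proof.
move=> p1 p2 a0.
have al01 : 0 < 2 - p < 1 by apply/andP; split; lra.
have := hoelder_sum_powR al01 a0 (fun i => sqr_ge0 (a i)).
rewrite (_ : 1 - (2 - p) = p - 1); last by ring.
rewrite (eq_bigr (fun i => a i `^ p)) // => i _.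
rewrite -(powR_mulrn 2) // -powRrM -powRD; last by apply/implyP => /eqP; lra.
by congr (_ `^ _); ring.
Qed.

End more.

Section powR_more.
Context {R : realType}.

Lemma powR_amgm1 (n x : R) : 1 < n -> 0 <= x ->
  n * x `^ ((n - 1) / n) <= 1 + (n - 1) * x.
Proof.
move=> n1 x0; have n0 : 0 < n by lra.
have al01 : 0 < (n - 1) / n < 1 by rewrite divr_gt0 ?ltr_pdivrMr /=; lra.
have := powR_amgm x0 ler01 al01.
rewrite powR1 mulr1 -(ler_pM2l n0) => /le_trans; apply.
by rewrite le_eqVlt; apply/orP; left; apply/eqP; field; lra.
Qed.

Lemma powR_sublinear_lt {al be u v s s' : R} : al < 1 -> be < 1 -> 0 < u -> 0 <= v ->
  0 < s -> s < s' -> s' <= s' `^ al * u + s' `^ be * v -> s < s `^ al * u + s `^ be * v.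
Proof.
move=> al1 be1 u0 v0 s0 ss'.
have [l l1 ->] : exists2 l, 1 < l & s' = l * s.
  by exists (s' / s); rewrite ?ltr_pdivlMr ?mul1r ?divfK ?gt_eqF.
have l0 : 0 < l by lra.
rewrite !powRM ?(ltW l0) ?(ltW s0) // -!mulrA.
have := ltr1_powR l1 al1; have := ltr1_powR l1 be1.
have : 0 < s `^ al * u by rewrite mulr_gt0 ?powR_gt0.
have : 0 <= s `^ be * v by rewrite mulr_ge0 ?powR_ge0.
move: (s `^ al * u) (s `^ be * v) (l `^ al) (l `^ be) => U V La Lb U0 V0 hb ha.
nra.
Qed.
End powR_more.

Lemma powR_mul_compl {R : realType} (x e : R) : 0 < x -> x `^ e * x `^ (1 - e) = x.
Proof. by move=> x0; rewrite -powRD ?subrKC ?powRr1 ?ltW // gt_eqF ?implybT. Qed.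

Section powR_extra.
Context {R : realType}.

Lemma powR_sub2 {x p : R} : 0 <= x -> 0 < p -> x `^ p = x `^ (p - 2) * x ^+ 2.
Proof.
move=> x0 p0; have [->|xn0] := eqVneq x 0; first by rewrite expr0n mulr0 powR0 ?gt_eqF.
by rewrite -(powR_mulrn 2) // -powRD ?subrK // xn0 implybT.
Qed.

Lemma sum_powR_le {I : finType} {a : I -> R} {p} : 1 <= p -> (forall i, 0 <= a i) ->
  \sum_i a i `^ p <= (\sum_i a i) `^ p.
Proof.
move=> p1 a0; have p0 : 0 < p by exact: lt_le_trans ltr01 p1.
have S0 : 0 <= \sum_i a i by exact: sumr_ge0.
rewrite -mulr_powRB1 // mulr_suml; apply: ler_sum => i _.
rewrite -mulr_powRB1 // ler_wpM2l // ge0_ler_powR ?nnegrE ?subr_ge0 //.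
by rewrite (bigD1 i) //= lerDl sumr_ge0.
Qed.

Lemma powR_le_inv {s a z al be : R} : 0 < s -> 0 <= a -> 0 <= z -> 0 < be ->
  a <= s `^ al * z `^ be -> s `^ (- al / be) * a `^ be^-1 <= z.
Proof.
move=> s0 a0 z0 be0; have ibe : 0 <= be^-1 by rewrite invr_ge0 ltW.
move=> /(ge0_ler_powR ibe).
rewrite !nnegrE a0 mulr_ge0 ?powR_ge0 // => /(_ isT isT).
rewrite powRM ?powR_ge0 // -!powRrM mulfV ?gt_eqF // powRr1 // => h.
rewrite -[z]mul1r -(powRr0 s) -(addNr (al / be)) powRD; last by rewrite (lt0r_neq0 s0) implybT.
by rewrite -mulrA mulNr ler_wpM2l ?powR_ge0.
Qed.

End powR_extra.

Definition hoelder_bound {R : realType} (N : nat) (p a b s : R) : R :=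
  s `^ ((p - 2) / (p - 1)) * a `^ (1 - (p - 2) / (p - 1)) +
  N%:R * (N%:R - 1) * (s `^ (1 - 2 / p) * b `^ (2 / p)).

Lemma rNp_gt0 {R : realType} {N} {p : R} : 2 <= N%:R :> R -> 1 < p -> 0 < rNp N p.
Proof.
move=> n2 p1; have : 0 < (p - 1) * (2 * N%:R - 1) by apply: mulr_gt0; lra.
by rewrite /rNp => ?; apply: divr_gt0; lra.
Qed.

(* This identity is what singles out r(N,p). *)
Lemma rNp_exponent {R : realType} {N} {p : R} : 2 <= N%:R :> R -> 1 < p ->
  rNp N p * (N%:R - 1) / N%:R * (1 - 2 / p) + rNp N p = 2 / p.
Proof.
move=> n2 p1; have : 0 < (p - 1) * (2 * N%:R - 1) by apply: mulr_gt0; lra.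
by rewrite /rNp => ?; field; rewrite !gt_eqF //; lra.
Qed.

Lemma rNp_amgm {R : realType} {N} {p t : R} : 2 <= N%:R :> R -> 1 < p -> 0 <= t ->
  let n := N%:R in let e := 1 - 2 / p in let w := 1 + (n - 1) * t `^ rNp N p in
  (2 < p -> n `^ e * t `^ (2 / p) <= w `^ e * t `^ rNp N p) /\
  (p < 2 -> w `^ e * t `^ rNp N p <= n `^ e * t `^ (2 / p)).
Proof.
move=> n2 p1 t0 /=.
have n1 : 1 < N%:R :> R by lra.
have e_ge0 : 2 < p -> 0 <= 1 - 2 / p by move=> p2; rewrite subr_ge0 ler_pdivrMr; lra.
have e_le0 : p < 2 -> 1 - 2 / p <= 0 by move=> p2; rewrite subr_le0 ler_pdivlMr; lra.
have [->|tn0] := eqVneq t 0.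
  by rewrite !powR0 ?mulr0 ?gt_eqF ?rNp_gt0 ?divr_gt0 //; lra.
have nq0 : 0 < N%:R * t `^ (rNp N p * (N%:R - 1) / N%:R).
  by rewrite mulr_gt0 ?powR_gt0 ?lt0r ?tn0; lra.
have mean : N%:R * t `^ (rNp N p * (N%:R - 1) / N%:R) <= 1 + (N%:R - 1) * t `^ rNp N p.
  by rewrite -mulrA powRrM powR_amgm1 ?powR_ge0.
have -> : t `^ (2 / p) =
    (t `^ (rNp N p * (N%:R - 1) / N%:R)) `^ (1 - 2 / p) * t `^ rNp N p.
  by rewrite -powRrM -powRD ?rNp_exponent // tn0 implybT.
rewrite mulrA -powRM ?powR_ge0 ?ler0n //.
have w0 : 0 <= 1 + (N%:R - 1) * t `^ rNp N p by rewrite (le_trans (ltW nq0)).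
split=> hp; apply: ler_wpM2r; rewrite ?powR_ge0 //.
- by apply: (ge0_ler_powR (e_ge0 hp)) mean; rewrite nnegrE ?(ltW nq0).
- exact: le0_ger_powR (e_le0 hp) nq0 mean.
Qed.

Lemma hoelder_bound_extremal {R : realType} {N} {p a b : R} :
  2 <= N%:R :> R -> 1 < p -> 0 < a -> 0 <= b ->
  let s0 := (1 + (N%:R - 1) * (N%:R * b / a) `^ rNp N p) `^ (p - 1) * a in
  (2 < p -> hoelder_bound N p a b s0 <= s0) /\
  (p < 2 -> s0 <= hoelder_bound N p a b s0).
Proof.
move=> n2 p1 a0 b0 /=.
have n0 : 0 < N%:R :> R by lra.
have p0 : 0 < p by lra.
have [t t0 ->] : exists2 t, 0 <= t & b = t * a / N%:R.
  exists (N%:R * b / a); first exact: divr_ge0 (mulr_ge0 (ler0n _ _) b0) (ltW a0).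
  by field; rewrite !gt_eqF.
rewrite (_ : N%:R * (t * a / N%:R) / a = t); last by field; rewrite !gt_eqF.
have w1 : 1 <= 1 + (N%:R - 1) * t `^ rNp N p by rewrite lerDl mulr_ge0 ?powR_ge0 //; lra.
have [key_gt key_lt] := rNp_amgm n2 p1 t0.
have [w wE] : exists w, w = 1 + (N%:R - 1) * t `^ rNp N p by eexists.
rewrite /hoelder_bound -wE in w1 key_gt key_lt *.
have w0 : 0 < w by exact: lt_le_trans w1.
have E1 : (w `^ (p - 1) * a) `^ ((p - 2) / (p - 1)) * a `^ (1 - (p - 2) / (p - 1)) =
    a * w `^ (p - 2).
  rewrite powRM ?powR_ge0 ?ltW // -powRrM -mulrA powR_mul_compl // mulrC.
  by congr (_ * w `^ _); field; rewrite gt_eqF // subr_gt0.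
have E2 : N%:R * (N%:R - 1) * ((w `^ (p - 1) * a) `^ (1 - 2 / p) * (t * a / N%:R) `^ (2 / p)) =
    (N%:R - 1) * a * w `^ ((p - 1) * (1 - 2 / p)) * (N%:R `^ (1 - 2 / p) * t `^ (2 / p)).
  have ta : (t * a / N%:R) `^ (2 / p) = t `^ (2 / p) * a `^ (2 / p) / N%:R `^ (2 / p).
    apply/esym; rewrite -powRM ?(ltW a0) // -{1}(divfK (lt0r_neq0 n0) (t * a)).
    by rewrite powRM ?mulfK ?gt_eqF ?powR_gt0 ?divr_ge0 ?mulr_ge0 ?(ltW a0) ?(ltW n0).
  have compl2 x : 0 < x -> x = x `^ (1 - 2 / p) * x `^ (2 / p).
    by move=> x0; rewrite -{2}(subKr 1 (2 / p)) powR_mul_compl.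
  rewrite powRM ?powR_ge0 ?ltW // -powRrM ta {1}(compl2 _ n0) [in RHS](compl2 _ a0).
  by field; rewrite gt_eqF ?powR_gt0.
have E3 : w `^ (p - 1) * a =
    a * w `^ (p - 2) + (N%:R - 1) * a * w `^ ((p - 1) * (1 - 2 / p)) * (w `^ (1 - 2 / p) * t `^ rNp N p).
  transitivity (a * w `^ (p - 2) * w).
    rewrite mulrC -mulrA -[X in _ `^ _ * X](powRr1 (ltW w0)) -powRD ?lt0r_neq0 ?implybT //.
    by congr (_ * _ `^ _); lra.
  have -> : w `^ (p - 2) = w `^ ((p - 1) * (1 - 2 / p)) * w `^ (1 - 2 / p).
    rewrite -powRD ?lt0r_neq0 ?implybT //; congr (_ `^ _).
    by field; rewrite gt_eqF.
  by rewrite [X in _ * X = _]wE; ring.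
have K0 : 0 <= (N%:R - 1) * a * w `^ ((p - 1) * (1 - 2 / p)).
  by rewrite !mulr_ge0 ?powR_ge0 ?(ltW a0) // subr_ge0; lra.
split=> hp; rewrite E1 E2 E3 lerD2l ler_wpM2l //.
- exact: key_gt.
- exact: key_lt.
Qed.

Lemma le_hoelder_bound {R : realType} {N} {p a b s : R} :
  2 <= N%:R :> R -> 2 < p -> 0 < a -> 0 <= b -> 0 <= s ->
  s <= hoelder_bound N p a b s ->
  s <= (1 + (N%:R - 1) * (N%:R * b / a) `^ rNp N p) `^ (p - 1) * a.
Proof.
move=> n2 p2 a0 b0 s0 hs; have p1 : 1 < p by lra.
have th1 : (p - 2) / (p - 1) < 1 by rewrite ltr_pdivrMr; lra.
have e1 : 1 - 2 / p < 1 by rewrite gtrBl divr_gt0 //; lra.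
have u0 : 0 < a `^ (1 - (p - 2) / (p - 1)) by rewrite powR_gt0.
have v0 : 0 <= N%:R * (N%:R - 1) * b `^ (2 / p).
  by rewrite !mulr_ge0 ?powR_ge0 // subr_ge0; lra.
have [ext _] := hoelder_bound_extremal n2 p1 a0 b0.
set s1 := _ `^ (p - 1) * a in ext *.
have s1_gt0 : 0 < s1 by rewrite mulr_gt0 ?powR_gt0 // (lt_le_trans ltr01) // lerDl mulr_ge0 ?powR_ge0 // subr_ge0; lra.
clearbody s1; rewrite leNgt; apply/negP => s1s.
move: ext hs; rewrite /hoelder_bound !(mulrCA (N%:R * _)) => /(_ p2) ext hs.
have := powR_sublinear_lt th1 e1 u0 v0 s1_gt0 s1s hs.
by rewrite ltNge ext.
Qed.

Lemma ge_hoelder_bound {R : realType} {N} {p a b s : R} :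
  2 <= N%:R :> R -> 1 < p -> p < 2 -> 0 < a -> 0 <= b -> 0 < s ->
  hoelder_bound N p a b s <= s ->
  (1 + (N%:R - 1) * (N%:R * b / a) `^ rNp N p) `^ (p - 1) * a <= s.
Proof.
move=> n2 p1 p2 a0 b0 s0 hs.
have th1 : (p - 2) / (p - 1) < 1 by rewrite ltr_pdivrMr; lra.
have e1 : 1 - 2 / p < 1 by rewrite gtrBl divr_gt0 //; lra.
have u0 : 0 < a `^ (1 - (p - 2) / (p - 1)) by rewrite powR_gt0.
have v0 : 0 <= N%:R * (N%:R - 1) * b `^ (2 / p).
  by rewrite !mulr_ge0 ?powR_ge0 // subr_ge0; lra.
have [_ ext] := hoelder_bound_extremal n2 p1 a0 b0.
set s1 := _ `^ (p - 1) * a in ext *.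
clearbody s1; rewrite leNgt; apply/negP => ss1.
move: ext hs; rewrite /hoelder_bound !(mulrCA (N%:R * _)) => /(_ p2) ext hs.
have := powR_sublinear_lt th1 e1 u0 v0 s0 ss1 ext.
by rewrite ltNge hs.
Qed.

Section nonneg_Rintegral.
Context {d : measure_display} {T : measurableType d} {R : realType}.
Variable mu : {measure set T -> \bar R}.

Lemma ge0_integrable (g : T -> R) : measurable_fun setT g -> (forall x, 0 <= g x) ->
  (\int[mu]_x (g x)%:E < +oo)%E -> mu.-integrable setT (EFin \o g).
Proof.
move=> mg g0 gfin; apply/integrableP; split; first exact/measurable_EFinP.
rewrite (eq_integral (fun x => (g x)%:E)) // => x _.
by rewrite gee0_abs ?lee_fin.
Qed.

Lemma measurable_fun_powR {h : T -> R} q :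
  measurable_fun setT h -> measurable_fun setT (fun x => h x `^ q).
Proof.
by move=> mh; apply: (@measurableT_comp _ _ _ _ _ _ (@powR R ^~ q)) => //; exact: measurable_powR.
Qed.

Lemma le_ge0_integrable {g h : T -> R} (k : R) : measurable_fun setT g ->
  (forall x, 0 <= g x <= k * h x) -> mu.-integrable setT (EFin \o h) ->
  mu.-integrable setT (EFin \o g).
Proof.
move=> mg gh ih; apply: le_integrable (integrableZl measurableT k ih) => //.
  exact/measurable_EFinP.
move=> x _ /=; have /andP[g0 gh'] := gh x.
by rewrite lee_fin !ger0_norm // (le_trans g0).
Qed.

Lemma EFin_Rintegral {h : T -> R} : mu.-integrable setT (EFin \o h) ->
  (\int[mu]_x h x)%:E = (\int[mu]_x (h x)%:E)%E.
Proof. by move=> ih; rewrite fineK // integrable_fin_num. Qed.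

Let Lnorm_powR (u : T -> R) (al : R) : 0 < al -> (forall x, 0 <= u x) ->
  Lnorm mu (al^-1)%:E (EFin \o (fun x => u x `^ al)) = ((\int[mu]_x (u x)%:E) `^ al)%E.
Proof.
move=> al0 u0; rewrite unlock /= invrK; congr (_ `^ _)%E.
apply: eq_integral => x _ /=.
by rewrite ger0_norm ?powR_ge0 // -powRrM mulfV ?gt_eqF // powRr1.
Qed.

Lemma hoelder_Rintegral {g u v : T -> R} {al : R} : 0 < al < 1 ->
  measurable_fun setT g -> measurable_fun setT u -> measurable_fun setT v ->
  (forall x, 0 <= g x) -> (forall x, 0 <= u x) -> (forall x, 0 <= v x) ->
  (forall x, g x <= u x `^ al * v x `^ (1 - al)) ->
  mu.-integrable setT (EFin \o u) -> mu.-integrable setT (EFin \o v) ->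
  \int[mu]_x g x <= (\int[mu]_x u x) `^ al * (\int[mu]_x v x) `^ (1 - al).
Proof.
move=> /andP[al0 al1] mg mu_ mv g0 u0 v0 guv iu iv.
have be0 : 0 < 1 - al by rewrite subr_gt0.
have := @hoelder _ _ _ mu _ _ al^-1 (1 - al)^-1 (measurable_fun_powR al mu_) (measurable_fun_powR (1 - al) mv).
rewrite !invr_gt0 !invrK subrKC Lnorm1 !Lnorm_powR // => /(_ al0 be0 erefl).
under eq_integral do rewrite /= ger0_norm ?mulr_ge0 ?powR_ge0 //.
rewrite -(EFin_Rintegral iu) -(EFin_Rintegral iv) !poweR_EFin -EFinM => huv.
have hg : (\int[mu]_x (g x)%:E <= \int[mu]_x (u x `^ al * v x `^ (1 - al))%:E)%E.
  apply: ge0_le_integral => // [x _|||x _]; rewrite ?lee_fin //.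
  - exact/measurable_EFinP.
  - by apply/measurable_EFinP; apply: measurable_funM; exact: measurable_fun_powR.
have gfin : (\int[mu]_x (g x)%:E)%E \is a fin_num.
  by rewrite ge0_fin_numE ?integral_ge0 // ?(le_lt_trans (le_trans hg huv)) ?ltry // => x _; rewrite lee_fin.
by rewrite -lee_fin fineK // (le_trans hg huv).
Qed.
End nonneg_Rintegral.

Section sum_powR_integral.
Context {d : measure_display} {T : measurableType d} {R : realType}.
Variables (mu : {measure set T -> \bar R}) (N : nat) (f : 'I_N -> T -> R) (p : R).
Hypotheses (N2 : (2 <= N)%N) (mf : forall j, measurable_fun setT (f j))
  (f0 : forall j x, 0 <= f j x) (p1 : 1 < p) (fin_sum : (sumpnorm mu f p < +oo)%E).

Local Notation c := (N%:R * (N%:R - 1) : R).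
Local Notation S x := (\sum_(j < N) f j x).
Local Notation Q x := (\sum_(j < N) f j x ^+ 2).
Local Notation P := (pairavg f).
Local Notation A x := (\sum_(j < N) f j x `^ p).
Local Notation B x := (pairavg f x `^ (p / 2)).
Local Notation X x := (S x `^ (p - 2) * Q x).
Local Notation Y x := (S x `^ (p - 2) * pairavg f x).

Let p0 : 0 < p. Proof. exact: lt_trans ltr01 p1. Qed.
Let c_ge1 : 1 <= c.
Proof. have n2 : 2 <= N%:R :> R by rewrite (ler_nat R 2 N). nra. Qed.

Let S_ge0 x : 0 <= S x. Proof. by apply: sumr_ge0 => j _. Qed.
Let Q_ge0 x : 0 <= Q x. Proof. by apply: sumr_ge0 => j _; exact: sqr_ge0. Qed.
Let P_ge0 x : 0 <= P x.
Proof.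
rewrite /pairavg mulr_ge0 ?invr_ge0 //.
by do 2 (apply: sumr_ge0 => ? _); apply: mulr_ge0.
Qed.

Let X_ge0 x : 0 <= X x. Proof. by rewrite mulr_ge0 ?powR_ge0. Qed.
Let Y_ge0 x : 0 <= Y x. Proof. by rewrite mulr_ge0 ?powR_ge0. Qed.

Let sqr_S x : S x ^+ 2 = Q x + c * P x.
Proof.
rewrite sqr_sum_pairs /pairavg -natr_bin2; congr (_ + _).
by field; rewrite pnatr_eq0 -lt0n bin_gt0.
Qed.


Let Sp_split x : S x `^ p = X x + c * Y x.
Proof. by rewrite (powR_sub2 (S_ge0 x) p0) sqr_S mulrDr mulrCA. Qed.

Let Sp_le_A x : S x `^ p <= N%:R `^ (p - 1) * A x.
Proof. by have := powR_sum_le p1 (f0^~ x); rewrite card_ord. Qed.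

Let A_le_Sp x : A x <= S x `^ p.
Proof. exact: sum_powR_le (ltW p1) (f0^~ x). Qed.

Let B_le_Sp x : B x <= S x `^ p.
Proof.
have PS : P x <= S x ^+ 2.
  by rewrite sqr_S; have := Q_ge0 x; have := P_ge0 x; have := c_ge1; nra.
rewrite -(powR_mulrn 2) // in PS.
rewrite (le_trans (ge0_ler_powR _ _ _ PS)) ?nnegrE ?powR_ge0 ?divr_ge0 ?(ltW p0) //.
by rewrite -powRrM mulrC divfK.
Qed.

Let X_le_hoelder x : 2 < p ->
  X x <= (S x `^ p) `^ ((p - 2) / (p - 1)) * A x `^ (1 - (p - 2) / (p - 1)).
Proof.
move=> p2; set th := (p - 2) / (p - 1).
have thE : p * th = p - 2 + th by rewrite /th; field; rewrite subr_eq0 gt_eqF.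
have th0 : p - 2 + th != 0 by rewrite -thE mulf_neq0 ?gt_eqF ?divr_gt0 // subr_gt0 // ltrBlDl.
rewrite -powRrM thE [S x `^ (p - 2 + th)]powRD ?(negbTE th0) //.
by rewrite -mulrA ler_wpM2l ?powR_ge0 // sum_sqr_le_hoelder.
Qed.

Let Y_eq_hoelder x : Y x = (S x `^ p) `^ (1 - 2 / p) * B x `^ (2 / p).
Proof.
have pn0 : p != 0 by rewrite gt_eqF.
rewrite -!powRrM (_ : p * (1 - 2 / p) = p - 2); last by field.
by rewrite (_ : p / 2 * (2 / p) = 1) ?powRr1 //; field.
Qed.

Let A_le_hoelder x : p < 2 -> A x <= (S x `^ p) `^ (2 - p) * X x `^ (p - 1).
Proof.
move=> p2; apply: le_trans (sum_powR_le_hoelder p1 p2 (f0^~ x)) _.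
have E : p * (2 - p) + (p - 2) * (p - 1) = 2 - p by ring.
rewrite powRM ?powR_ge0 // mulrA -!powRrM -powRD E //.
by rewrite gt_eqF // subr_gt0.
Qed.

Let B_eq_hoelder x : B x = (S x `^ p) `^ (1 - p / 2) * Y x `^ (p / 2).
Proof.
have [S0|Sn0] := eqVneq (S x) 0.
  have P0 : P x = 0.
    by move: (sqr_S x) (Q_ge0 x) (P_ge0 x) c_ge1; rewrite S0 expr0n /=; nra.
  by rewrite P0 mulr0 !powR0 ?mulr0 // gt_eqF // divr_gt0.
rewrite powRM ?powR_ge0 // mulrA -!powRrM -powRD ?Sn0 ?implybT //.
by rewrite (_ : _ + _ = 0) ?powRr0 ?mul1r //; field.
Qed.

Let mS : measurable_fun setT (fun x => S x).
Proof. exact: measurable_sum. Qed.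

Let mP : measurable_fun setT P.
Proof.
apply: measurable_funM => //; apply: measurable_sum => i.
under eq_fun do rewrite big_mkcond.
by apply: measurable_sum => j; case: (i < j)%N; [exact: measurable_funM|exact: measurable_cst].
Qed.

Let mA : measurable_fun setT (fun x => A x).
Proof. by apply: measurable_sum => j; exact: measurable_fun_powR. Qed.

Let mX : measurable_fun setT (fun x => X x).
Proof.
apply: measurable_funM; first exact: measurable_fun_powR.
by apply: measurable_sum => j; exact: measurable_funX.
Qed.

Let mY : measurable_fun setT (fun x => Y x).
Proof. by apply: measurable_funM => //; exact: measurable_fun_powR. Qed.

Let sumpnorm_integral : sumpnorm mu f p = (\int[mu]_x (A x)%:E)%E.
Proof.
rewrite /sumpnorm /pnormq -ge0_integral_sum //; last first.
  by move=> j; apply/measurable_EFinP/measurable_fun_powR; exact: measurableT_comp.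
apply: eq_integral => x _; rewrite sumEFin; congr (_%:E); apply: eq_bigr => j _.
by rewrite ger0_norm.
Qed.

Let intA : mu.-integrable setT (EFin \o (fun x => A x)).
Proof.
apply: ge0_integrable => // [x|]; first by apply: sumr_ge0 => j _; exact: powR_ge0.
by rewrite -sumpnorm_integral.
Qed.

Let intSp : mu.-integrable setT (EFin \o (fun x => S x `^ p)).
Proof.
apply: (le_ge0_integrable mu (N%:R `^ (p - 1)) _ _ intA); first exact: measurable_fun_powR.
by move=> x; rewrite powR_ge0 Sp_le_A.
Qed.

Let intX : mu.-integrable setT (EFin \o (fun x => X x)).
Proof.
apply: (le_ge0_integrable mu 1 _ _ intSp) => // x.
by rewrite mul1r Sp_split lerDl X_ge0 mulr_ge0 ?Y_ge0 // (le_trans ler01 c_ge1).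
Qed.

Let intY : mu.-integrable setT (EFin \o (fun x => Y x)).
Proof.
apply: (le_ge0_integrable mu 1 _ _ intSp) => // x.
by rewrite mul1r Sp_split Y_ge0; move: (X_ge0 x) (Y_ge0 x) c_ge1; nra.
Qed.

Let intB : mu.-integrable setT (EFin \o (fun x => B x)).
Proof.
apply: (le_ge0_integrable mu 1 _ _ intSp) => [|x]; first exact: measurable_fun_powR.
by rewrite mul1r powR_ge0 B_le_Sp.
Qed.

Let Rintegral_Sp_split :
  \int[mu]_x S x `^ p = \int[mu]_x X x + c * \int[mu]_x Y x.
Proof.
rewrite (@eq_Rintegral _ _ _ mu setT (fun x => X x + c * Y x)) => [|x _]; last exact: Sp_split.
rewrite RintegralD ?RintegralZl //.
by apply: (eq_integrable measurableT _ _ _ (integrableZl measurableT c intY)) => x _; rewrite /= EFinM.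
Qed.

Lemma sumpnorm_Rintegral : sumpnorm mu f p = (\int[mu]_x A x)%:E.
Proof. by rewrite sumpnorm_integral EFin_Rintegral. Qed.

Lemma pnormq_sum_Rintegral :
  pnormq mu (fun x => S x) p = (\int[mu]_x S x `^ p)%:E.
Proof.
by rewrite EFin_Rintegral //; apply: eq_integral => x _; rewrite ger0_norm.
Qed.

Lemma Gammap_Rintegral :
  Gammap mu f p = N%:R * \int[mu]_x B x / \int[mu]_x A x.
Proof.
rewrite /Gammap sumpnorm_Rintegral /pnormq.
rewrite (eq_integral (fun x => (B x)%:E)) => [|x _]; last by rewrite ger0_norm.
by rewrite /= invfM invrK mulrCA mulrA.
Qed.

Lemma Rintegral_sum_powR_le : \int[mu]_x A x <= \int[mu]_x S x `^ p.
Proof. exact: le_Rintegral. Qed.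


Lemma Rintegral_powR_sum_le_hoelder_bound : 2 < p ->
  \int[mu]_x S x `^ p <=
  hoelder_bound N p (\int[mu]_x A x) (\int[mu]_x B x) (\int[mu]_x S x `^ p).
Proof.
move=> p2; have := p1 => p1'.
have th01 : 0 < (p - 2) / (p - 1) < 1 by rewrite divr_gt0 ?ltr_pdivrMr /=; lra.
have e01 : 0 < 1 - 2 / p < 1 by rewrite subr_gt0 ltr_pdivrMr ?gtrBl ?divr_gt0 /=; lra.
have mSp := measurable_fun_powR p mS.
have hY x : Y x <= (S x `^ p) `^ (1 - 2 / p) * B x `^ (1 - (1 - 2 / p)).
  by rewrite subKr Y_eq_hoelder.
rewrite [in leLHS]Rintegral_Sp_split /hoelder_bound; apply: lerD.
  apply: (hoelder_Rintegral mu th01 mX mSp mA X_ge0 _ _ (X_le_hoelder^~ p2) intSp intA) => x.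
    exact: powR_ge0.
  by apply: sumr_ge0 => j _; exact: powR_ge0.
rewrite ler_wpM2l ?(le_trans ler01 c_ge1) // -[E in _ * _ `^ E](subKr 1 (2 / p)).
apply: (hoelder_Rintegral mu e01 mY mSp _ Y_ge0 _ _ hY intSp intB) => [|x|x]; last exact: powR_ge0.
- exact: measurable_fun_powR.
- exact: powR_ge0.
Qed.

Lemma Rintegral_powR_sum_ge_hoelder_bound : p < 2 -> 0 < \int[mu]_x A x ->
  hoelder_bound N p (\int[mu]_x A x) (\int[mu]_x B x) (\int[mu]_x S x `^ p)
  <= \int[mu]_x S x `^ p.
Proof.
move=> p2 a0; have := p1 => p1'.
have al01 : 0 < 2 - p < 1 by apply/andP; split; lra.
have be01 : 0 < 1 - p / 2 < 1 by apply/andP; split; lra.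
have s0 : 0 < \int[mu]_x S x `^ p := lt_le_trans a0 Rintegral_sum_powR_le.
have mSp := measurable_fun_powR p mS.
have Sp0 x : 0 <= S x `^ p by exact: powR_ge0.
have hA x : A x <= (S x `^ p) `^ (2 - p) * X x `^ (1 - (2 - p)).
  by rewrite (_ : 1 - (2 - p) = p - 1); [exact: A_le_hoelder | ring].
have hB x : B x <= (S x `^ p) `^ (1 - p / 2) * Y x `^ (1 - (1 - p / 2)).
  by rewrite subKr B_eq_hoelder.
have mB : measurable_fun setT (fun x => B x) := measurable_fun_powR _ mP.
have A0 x : 0 <= A x by apply: sumr_ge0 => j _; exact: powR_ge0.
have pm1 : 0 < p - 1 by lra.
have int_ge0 (g : T -> R) : (forall x, 0 <= g x) -> 0 <= \int[mu]_x g x.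
  by move=> g0; apply: Rintegral_ge0 => x _.
have p20 : 0 < p / 2 by lra.
have B0 x : 0 <= B x by exact: powR_ge0.
have hX : (\int[mu]_x S x `^ p) `^ ((p - 2) / (p - 1)) *
    (\int[mu]_x A x) `^ (1 - (p - 2) / (p - 1)) <= \int[mu]_x X x.
  rewrite (_ : 1 - _ / _ = (p - 1)^-1); last by field; rewrite gt_eqF.
  rewrite (_ : (p - 2) / _ = - (2 - p) / (p - 1)); last by rewrite opprB.
  apply: (powR_le_inv s0 (int_ge0 _ A0) (int_ge0 _ X_ge0) pm1).
  have := hoelder_Rintegral mu al01 mA mSp mX A0 Sp0 X_ge0 hA intSp intX.
  by rewrite (_ : 1 - (2 - p) = p - 1) //; ring.
have hY : (\int[mu]_x S x `^ p) `^ (1 - 2 / p) * (\int[mu]_x B x) `^ (2 / p) <=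
    \int[mu]_x Y x.
  rewrite (_ : 1 - 2 / p = - (1 - p / 2) / (p / 2)); last by field; rewrite gt_eqF.
  rewrite -[2 / p]invf_div.
  apply: (powR_le_inv s0 (int_ge0 _ B0) (int_ge0 _ Y_ge0) p20).
  by have := hoelder_Rintegral mu be01 mB mSp mY B0 Sp0 Y_ge0 hB intSp intY; rewrite subKr.
rewrite [in leRHS]Rintegral_Sp_split /hoelder_bound lerD //.
by rewrite ler_wpM2l // (le_trans ler01 c_ge1).
Qed.

End sum_powR_integral.

Theorem mainTheorem1 (R : realType) (d : measure_display) (T : measurableType d)
  (mu : {measure set T -> \bar R}) (N : nat) (f : 'I_N -> T -> R)
  (hN : (2 <= N)%N)
  (hmeas : forall j, measurable_fun setT (f j))
  (hnn : forall j x, 0 <= f j x)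
  (p : R) (hp1 : 1 < p) (hp2 : p != 2)
  (hpos : (0 < sumpnorm mu f p)%E) (hfin : (sumpnorm mu f p < +oo)%E) :
  let Gam := Gammap mu f p in
  let C := (1 + (N%:R - 1) * Gam `^ rNp N p) `^ (p - 1) in
  (2 < p -> (pnormq mu (fun x => (\sum_(j < N) f j x)%R) p <= C%:E * sumpnorm mu f p)%E) /\
  (p < 2 -> (C%:E * sumpnorm mu f p <= pnormq mu (fun x => (\sum_(j < N) f j x)%R) p)%E).
Proof.
move=> Gam C; have n2 : 2 <= N%:R :> R by rewrite (ler_nat R 2 N).
rewrite sumpnorm_Rintegral // lte_fin in hpos.
rewrite /C /Gam Gammap_Rintegral // pnormq_sum_Rintegral // sumpnorm_Rintegral //.
rewrite -EFinM !lee_fin.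
have B0 : 0 <= \int[mu]_x (pairavg f x `^ (p / 2)) by apply: Rintegral_ge0 => x _; exact: powR_ge0.
have s_ge_a := Rintegral_sum_powR_le mu N f p hmeas hnn hp1 hfin.
split=> hp.
- apply: le_hoelder_bound => //; first exact: le_trans (ltW hpos) s_ge_a.
  exact: Rintegral_powR_sum_le_hoelder_bound.
- apply: ge_hoelder_bound => //; first exact: lt_le_trans hpos s_ge_a.
  exact: Rintegral_powR_sum_ge_hoelder_bound.
Qed.
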